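(* Let $(X,*,0)$ be a solid weak BCC-algebra and define $x\wedge y=y*(y*x)$. Then the following are equivalent: (1) $X$ is branchwise commutative; (2) for each $a\in I(X)$, the branch $B(a)$ is a semilattice with respect to the operation $\wedge$; (3) $A(x)\cap A(y)=A(x\wedge y)$ for all $x,y$ belonging to the same branch.
   Context: A weak BCC-algebra is a set $X$ with a binary operation $*$ and a constant $0$ satisfying, for all $x,y,z\in X$: (i) $((x*y)*(z*y))*(x*z)=0$; (ii) $x*x=0$; (iii) $x*0=x$; (iv) $x*y=y*x=0$ implies $x=y$. The relation $x\leqslant y$ iff $x*y=0$ is a partial order on $X$. Let $I(X)$ be the set of minimal elements of $X$ with respect to $\leqslant$. For $a\in I(X)$ the branch initiated by $a$ is $B(a)=\{x\in X: a\leqslant x\}$; ''belonging to the same branch'' means lying in a common $B(a)$. For $b\in X$, the initial part is $A(b)=\{x\in X: x\leqslant b\}$. A weak BCC-algebra is called (left) solid if $(x*y)*z=(x*z)*y$ holds for all $x,y$ belonging to the same branch and all $z\in X$. It is called branchwise commutative if $x*(x*y)=y*(y*x)$ holds for all $x,y$ belonging to the same branch. *)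

Section WeakBCC.
Variables (X : Type) (op : X -> X -> X) (e : X).
Local Infix "*" := op.

Definition weak_BCC : Prop :=
  (forall x y z, ((x * y) * (z * y)) * (x * z) = e) /\
  (forall x, x * x = e) /\
  (forall x, x * e = x) /\
  (forall x y, x * y = e -> y * x = e -> x = y).

Definition bcc_le (x y : X) : Prop := x * y = e.

Definition minimal_elt (a : X) : Prop := forall x, bcc_le x a -> x = a.

Definition branch (a : X) (x : X) : Prop := bcc_le a x.

Definition same_branch (x y : X) : Prop :=
  exists a, minimal_elt a /\ branch a x /\ branch a y.

Definition initial_part (b : X) (x : X) : Prop := bcc_le x b.

Definition solid : Prop :=
  forall x y z, same_branch x y -> (x * y) * z = (x * z) * y.

Definition branchwise_commutative : Prop :=
  forall x y, same_branch x y -> x * (x * y) = y * (y * x).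

Definition bmeet (x y : X) : X := y * (y * x).

End WeakBCC.

Definition semilattice_on {X : Type} (S : X -> Prop) (f : X -> X -> X) : Prop :=
  (forall x y, S x -> S y -> S (f x y)) /\
  (forall x, S x -> f x x = x) /\
  (forall x y, S x -> S y -> f x y = f y x) /\
  (forall x y z, S x -> S y -> S z -> f x (f y z) = f (f x y) z).


(* In a solid weak BCC-algebra, [x /\ y = y * (y * x)] is always a lower bound
   of x and y lying in their common branch, and every element below x lies in
   the branch of x.  Branchwise commutativity is exactly what makes it the
   greatest lower bound: if t <= x and t <= y then y * (y * t) = t, so
   t <= y * (y * x) by antitonicity of [y * _].  Hence (1) gives a meet
   semilattice on each branch (2), and (2) gives (1) by commutativity.  (3)
   restates the glb property, and conversely applying (3) to the lower bounds
   x /\ y and y /\ x yields their equality, i.e. (1). *)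

Section WeakBCC.
Variables (X : Type) (op : X -> X -> X) (e : X).
Hypothesis HX : weak_BCC X op e.

Local Infix "*" := op.
Local Notation "x <= y" := (x * y = e).
Local Notation minimal := (minimal_elt X op e).
Local Notation meet := (bmeet X op).

Lemma bcc_axiom x y z : ((x * y) * (z * y)) * (x * z) = e.
Proof. apply (proj1 HX). Qed.

Lemma bcc_opxx x : x * x = e.
Proof. apply (proj1 (proj2 HX)). Qed.

Lemma bcc_opx0 x : x * e = x.
Proof. apply (proj1 (proj2 (proj2 HX))). Qed.

Lemma bcc_le_anti x y : x <= y -> y <= x -> x = y.
Proof. apply (proj2 (proj2 (proj2 HX))). Qed.

Lemma bcc_le_op2r x y z : x <= y -> x * z <= y * z.
Proof. intros Hxy. generalize (bcc_axiom x z y). now rewrite Hxy, bcc_opx0. Qed.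

Lemma bcc_le_op2l x y z : z <= y -> x * y <= x * z.
Proof. intros Hzy. generalize (bcc_axiom x y z). now rewrite Hzy, bcc_opx0. Qed.

Lemma bcc_le0 u : u <= e -> u = e.
Proof. now rewrite bcc_opx0. Qed.

Lemma bcc_le_trans x y z : x <= y -> y <= z -> x <= z.
Proof.
  intros Hxy Hyz. apply bcc_le0.
  generalize (bcc_le_op2l x z y Hyz). now rewrite Hxy.
Qed.

Lemma same_branch_sym x y : same_branch X op e x y -> same_branch X op e y x.
Proof. intros (a & Ha & Hx & Hy). now exists a. Qed.

Lemma minimal_op0op0 a : minimal a -> e * (e * a) = a.
Proof.
  intros Ha. apply Ha. unfold bcc_le.
  generalize (bcc_axiom a a e). now rewrite bcc_opxx, bcc_opx0.
Qed.

Lemma minimal_op_branch0 a z : minimal a -> e <= z -> a * z = a.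
Proof.
  intros Ha Hz. apply Ha. unfold bcc_le.
  generalize (bcc_axiom a z e). now rewrite Hz, !bcc_opx0.
Qed.

Lemma branch_op_branch0 a x y : a <= x -> a <= y -> e <= x * y.
Proof. intros Hx Hy. generalize (bcc_le_op2r a x y Hx). now rewrite Hy. Qed.

Lemma branch_below a x t : minimal a -> a <= x -> t <= x -> a <= t.
Proof.
  intros Ha Hax Htx.
  assert (Hta : e <= t * a).
  { generalize (bcc_axiom t x a). now rewrite Htx, Hax, bcc_opxx. }
  apply bcc_le_trans with ((t * a) * (e * a)).
  - generalize (bcc_axiom e (e * a) (t * a)).
    now rewrite (minimal_op0op0 a Ha), Hta, bcc_opx0.
  - generalize (bcc_axiom t a e). now rewrite bcc_opx0.
Qed.

Lemma branch_meet a x y : minimal a -> a <= x -> a <= y -> a <= meet x y.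
Proof.
  intros Ha Hx Hy. unfold bmeet.
  generalize (bcc_le_op2r a y (y * x) Hy).
  now rewrite (minimal_op_branch0 a (y * x) Ha (branch_op_branch0 a y x Hy Hx)).
Qed.

Section Solid.
Hypothesis Hsolid : solid X op e.

Lemma meet_le_l x y : same_branch X op e x y -> meet x y <= x.
Proof.
  intros Hb. unfold bmeet.
  generalize (Hsolid y x (y * x) (same_branch_sym x y Hb)).
  now rewrite bcc_opxx.
Qed.

Lemma meet_le_r x y : same_branch X op e x y -> meet x y <= y.
Proof.
  intros (a & Ha & Hx & Hy). unfold bmeet.
  assert (Hyy : same_branch X op e y y) by now exists a.
  generalize (Hsolid y y (y * x) Hyy).
  now rewrite bcc_opxx, (branch_op_branch0 a y x Hy Hx).
Qed.

Section BranchwiseCommutative.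
Hypothesis Hcomm : branchwise_commutative X op e.

Lemma meet_glb a x y t : minimal a -> a <= x -> a <= y ->
  t <= x -> t <= y -> t <= meet x y.
Proof.
  intros Ha Hx Hy Htx Hty. unfold bmeet.
  assert (Hyt : y * (y * t) = t).
  { rewrite (Hcomm y t) by (exists a; repeat split; auto; exact (branch_below a x t Ha Hx Htx)).
    now rewrite Hty, bcc_opx0. }
  rewrite <- Hyt.
  now apply bcc_le_op2l, bcc_le_op2l.
Qed.

Lemma branchwise_commutative_semilattice a :
  minimal a -> semilattice_on (branch X op e a) meet.
Proof.
  intros Ha. unfold branch, bcc_le.
  assert (Hb : forall u v, a <= u -> a <= v -> same_branch X op e u v)
    by now exists a.
  repeat split.
  - intros x y. now apply branch_meet.
  - intros x _. unfold bmeet. now rewrite bcc_opxx, bcc_opx0.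
  - intros x y Hx Hy. symmetry. now apply Hcomm, Hb.
  - (* Both sides are the greatest lower bound of x, y and z. *)
    intros x y z Hx Hy Hz.
    assert (Hyz := branch_meet a y z Ha Hy Hz).
    assert (Hxy := branch_meet a x y Ha Hx Hy).
    assert (HL := branch_meet a x _ Ha Hx Hyz).
    assert (HR := branch_meet a _ z Ha Hxy Hz).
    assert (Hyz_y := meet_le_l y z (Hb _ _ Hy Hz)).
    assert (Hyz_z := meet_le_r y z (Hb _ _ Hy Hz)).
    assert (Hxy_x := meet_le_l x y (Hb _ _ Hx Hy)).
    assert (Hxy_y := meet_le_r x y (Hb _ _ Hx Hy)).
    assert (HL_x := meet_le_l x _ (Hb _ _ Hx Hyz)).
    assert (HL_yz := meet_le_r x _ (Hb _ _ Hx Hyz)).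
    assert (HR_xy := meet_le_l _ z (Hb _ _ Hxy Hz)).
    assert (HR_z := meet_le_r _ z (Hb _ _ Hxy Hz)).
    apply bcc_le_anti; apply (meet_glb a); eauto using bcc_le_trans;
      apply (meet_glb a); eauto using bcc_le_trans.
Qed.

Lemma branchwise_commutative_initial_part x y : same_branch X op e x y ->
  forall t, (initial_part X op e x t /\ initial_part X op e y t) <->
            initial_part X op e (meet x y) t.
Proof.
  intros Hb t. unfold initial_part, bcc_le.
  destruct Hb as (a & Ha & Hx & Hy). split.
  - intros [Htx Hty]. now apply (meet_glb a).
  - intros Ht. split; eapply bcc_le_trans; eauto.
    + apply meet_le_l. now exists a.
    + apply meet_le_r. now exists a.
Qed.

End BranchwiseCommutative.

Lemma semilattice_branchwise_commutative :
  (forall a, minimal a -> semilattice_on (branch X op e a) meet) ->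
  branchwise_commutative X op e.
Proof.
  intros Hsl x y (a & Ha & Hx & Hy).
  destruct (Hsl a Ha) as (_ & _ & Hc & _).
  symmetry. exact (Hc x y Hx Hy).
Qed.

Lemma initial_part_branchwise_commutative :
  (forall x y, same_branch X op e x y ->
     forall t, (initial_part X op e x t /\ initial_part X op e y t) <->
               initial_part X op e (meet x y) t) ->
  branchwise_commutative X op e.
Proof.
  intros Hglb x y Hb.
  assert (Hb' := same_branch_sym x y Hb).
  apply bcc_le_anti.
  - apply (Hglb x y Hb). split.
    + exact (meet_le_r y x Hb').
    + exact (meet_le_l y x Hb').
  - apply (Hglb y x Hb'). split.
    + exact (meet_le_r x y Hb).
    + exact (meet_le_l x y Hb).
Qed.

End Solid.
End WeakBCC.

Theorem theorem3p7 (X : Type) (op : X -> X -> X) (e : X)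
  (HX : weak_BCC X op e) (Hsolid : solid X op e) :
  (branchwise_commutative X op e <->
     (forall a, minimal_elt X op e a ->
        semilattice_on (branch X op e a) (bmeet X op))) /\
  ((forall a, minimal_elt X op e a ->
        semilattice_on (branch X op e a) (bmeet X op)) <->
     (forall x y, same_branch X op e x y ->
        forall t, (initial_part X op e x t /\ initial_part X op e y t) <->
                  initial_part X op e (bmeet X op x y) t)).
Proof.
  split; split; intros H.
  - exact (branchwise_commutative_semilattice X op e HX Hsolid H).
  - exact (semilattice_branchwise_commutative X op e H).
  - apply (branchwise_commutative_initial_part X op e HX Hsolid).
    exact (semilattice_branchwise_commutative X op e H).
  - apply (branchwise_commutative_semilattice X op e HX Hsolid).
    exact (initial_part_branchwise_commutative X op e HX Hsolid H).
Qed.
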